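(* For any integer $x\in\mathbb{N}\setminus\{1\}$, the filter $\mathcal{F}_{\{1,x\}}$ is the greatest element (with respect to inclusion) of the set $\{\mathcal{F}_{\{1,x^n\}}:n\in\mathbb{N}\}$. If moreover $x\notin\{2m:m\in\mathbb{N}\}\cup\{2^m-1:m\in\mathbb{N}\}$, then $\{n\in\mathbb{N}:\mathcal{F}_{\{1,x^n\}}=\mathcal{F}_{\{1,x\}}\}=\{1\}$.
   Context: $\mathbb{N}=\{1,2,\dots\}$, $\mathbb{N}_0=\{0\}\cup\mathbb{N}$. The Kirch topology $\tau_K$ on $\mathbb{N}$ is generated by the base of all $a+b\mathbb{N}_0=\{a+bn:n\in\mathbb{N}_0\}$ with $a,b\in\mathbb{N}$ coprime and $b$ square-free. Closures $\overline{U}$ are in $\tau_K$; $\tau_y=\{U\in\tau_K:y\in U\}$. For finite $E\subseteq\mathbb{N}$, $\mathcal{F}_E=\{B\subseteq\mathbb{N}:\exists (U_y)_{y\in E}\in\prod_{y\in E}\tau_y\ (\bigcap_{y\in E}\overline{U_y}\subseteq B)\}$. *)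

From mathcomp Require Import all_boot.
From mathcomp Require Import classical_sets.
Set Implicit Arguments. Unset Strict Implicit. Unset Printing Implicit Defensive.
Local Open Scope classical_set_scope.

(* The ambient space N = {1,2,...} is represented by the positive naturals
   inside nat; all subsets of N are subsets of nat contained in Npos. *)
Definition Npos : set nat := [set n | (0 < n)%N].

Definition squarefree (b : nat) : Prop := forall p, prime p -> ~~ (p * p %| b)%N.

Definition arith (a b : nat) : set nat := [set m | exists n : nat, m = (a + b * n)%N].

Definition kirch_param (a b : nat) : Prop :=
  (0 < a)%N /\ (0 < b)%N /\ coprime a b /\ squarefree b.

Definition kirch_open (U : set nat) : Prop :=
  U `<=` Npos /\
  forall x, U x -> exists a b, kirch_param a b /\ arith a b x /\ arith a b `<=` U.

Definition kirch_closure (U : set nat) : set nat :=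
  [set x | Npos x /\ forall V, kirch_open V -> V x -> exists z, V z /\ U z].

Definition tau (y : nat) : set (set nat) := [set U | kirch_open U /\ U y].

Definition filterF (E : set nat) : set (set nat) :=
  [set B | B `<=` Npos /\
     exists Uf : nat -> set nat, (forall y, E y -> tau y (Uf y)) /\
       [set z | forall y, E y -> kirch_closure (Uf y) z] `<=` B].

Definition pair1 (x : nat) : set nat := [set y | y = 1%N \/ y = x].

(* The Kirch closure of a + b N_0 is the set of z > 0 with z = a (mod p) for every
   prime p dividing b but not z.  So if 1 + b N_0 and x^n + d N_0 witness a member of
   F_{1,x^n}, then 1 + lcm(b,d) N_0 and x + d N_0 witness it as a member of F_{1,x}:
   modulo a prime of d, their closures force z = 1 = x, hence z = x^n.
   Conversely, let p be a prime dividing x^n - 1 but not x - 1.  The intersection of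
   the closures of 1 + p N_0 and x + p N_0 is in F_{1,x}, yet misses a point of every
   basic set of F_{1,x^n}: some z = 1 (mod p) divisible by all the other primes around.
   For n > 1 such a p divides 1 + x + ... + x^(q-1) for a prime q | n; otherwise this
   sum would be a power of q with q | x - 1, impossible as it is q (mod q^2) for odd q
   and x + 1 for q = 2. *)

From mathcomp Require Import all_boot.
From mathcomp Require Import classical_sets.
From mathcomp Require Import zify.
Local Open Scope classical_set_scope.
Set Implicit Arguments. Unset Strict Implicit. Unset Printing Implicit Defensive.

Lemma squarefree_prime p : prime p -> squarefree p.
Proof.
move=> pr_p q pr_q; have [eq_qp|ne_qp] := eqVneq q p.
  by rewrite eq_qp mulnn pfactor_dvdn ?prime_gt0 // logn_prime // eqxx.
by apply: contra ne_qp => /(dvdn_trans (dvdn_mulr q (dvdnn q))); rewrite dvdn_prime2.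
Qed.

Lemma squarefree_dvd d g : d %| g -> squarefree g -> squarefree d.
Proof. by move=> dv_dg sqf_g p /sqf_g; apply: contra => /dvdn_trans->. Qed.

Lemma logn_squarefree p b : 0 < b -> squarefree b -> logn p b <= 1.
Proof.
move=> b_gt0 sqf_b; have [pr_p|] := boolP (prime p); last by move=> np; rewrite lognE (negPf np).
by have := sqf_b p pr_p; rewrite mulnn pfactor_dvdn // -ltnNge ltnS.
Qed.

Lemma squarefree_lcm b d : 0 < b -> 0 < d ->
  squarefree b -> squarefree d -> squarefree (lcmn b d).
Proof.
move=> b_gt0 d_gt0 sqf_b sqf_d p pr_p.
rewrite mulnn pfactor_dvdn ?lcmn_gt0 ?b_gt0 // logn_lcm // -ltnNge ltnS.
by rewrite geq_max !logn_squarefree.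
Qed.

Lemma dvdn_squarefree g t : 0 < g -> squarefree g ->
  (forall p, prime p -> p %| g -> p %| t) -> g %| t.
Proof.
move=> g_gt0 sqf_g dv_pt; apply/dvdn_partP => // p.
rewrite mem_primes => /and3P[pr_p _ dv_pg].
have /eqP log1 : logn p g == 1.
  by rewrite eqn_leq logn_squarefree // logn_gt0 mem_primes pr_p g_gt0.
by rewrite p_part log1 expn1 dv_pt.
Qed.

Lemma eq_mod_squarefree g a z : 0 < g -> squarefree g ->
  (forall p, prime p -> p %| g -> z = a %[mod p]) -> z = a %[mod g].
Proof.
move=> g_gt0 sqf_g; wlog le_az : a z / a <= z => [sym|eq_mod].
  case: (leqP a z) => [|/ltnW] le eq_mod; first exact: sym.
  by symmetry; apply: sym => // p pr_p /(eq_mod p pr_p).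
apply/eqP; rewrite eqn_mod_dvd //; apply: dvdn_squarefree => // p pr_p dv_pg.
by rewrite -eqn_mod_dvd // eq_mod.
Qed.

Lemma exp1Dn_expand y i : exists c, (1 + y) ^ i = 1 + i * y + y * y * c.
Proof.
elim: i => [|i [c IH]]; first by exists 0; rewrite expn0; lia.
by exists (c + i + y * c); rewrite expnS IH; nia.
Qed.

Lemma sum_exp1Dn_expand y k :
  exists c, \sum_(i < k) (1 + y) ^ i = k + y * ('C(k, 2) + y * c).
Proof.
elim: k => [|k [c IH]]; first by exists 0; rewrite big_ord0 bin0n; lia.
have [c' e] := exp1Dn_expand y k.
by exists (c + c'); rewrite big_ord_recr /= IH e binS bin1; nia.
Qed.

Section CyclotomicSum.

Variables (x q : nat).
Hypotheses (x_gt1 : 1 < x) (pr_q : prime q).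

Let Phi := \sum_(i < q) x ^ i.

Lemma sum_expn_expand : exists c, Phi = q + (x - 1) * ('C(q, 2) + (x - 1) * c).
Proof. by rewrite /Phi -{1}(subnK (ltnW x_gt1)) addnC; exact: sum_exp1Dn_expand. Qed.

Lemma prime_dvd_sum_expn_sub1 p : prime p -> p %| Phi -> p %| x - 1 -> p = q.
Proof.
move=> pr_p dv_pPhi dv_px; have [c ePhi] := sum_expn_expand.
by move: dv_pPhi; rewrite ePhi dvdn_addl ?dvdn_mulr // dvdn_prime2 // => /eqP.
Qed.

Lemma prime_lt_sum_expn : q < Phi.
Proof.
have [c ->] := sum_expn_expand; have := prime_gt1 pr_q.
have : 0 < 'C(q, 2) by rewrite bin_gt0 prime_gt1.
nia.
Qed.

Lemma pnat_sum_expn_mersenne : q.-nat Phi -> q %| x - 1 -> q = 2 /\ exists m, x = 2 ^ m - 1.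
Proof.
move=> /p_natP[k ePhi] dv_qx.
have k_gt1 : 1 < k by rewrite -(ltn_exp2l _ _ (prime_gt1 pr_q)) -ePhi expn1 prime_lt_sum_expn.
have [q2|q_ne2] := eqVneq q 2.
  split=> //; exists k; move: ePhi.
  by rewrite /Phi q2 !big_ord_recr big_ord0 /= expn0 expn1 => <-; lia.
have [c ePhi'] := sum_expn_expand.
have dv_qqC : q %| 'C(q, 2) by rewrite prime_dvd_bin //= ltn_neqAle eq_sym q_ne2 prime_gt1.
have dv_qqM : q * q %| (x - 1) * ('C(q, 2) + (x - 1) * c).
  by apply: dvdn_mul; rewrite // dvdn_add // dvdn_mulr.
have dv_qqPhi : q * q %| Phi by rewrite ePhi mulnn dvdn_exp2l.
by move: dv_qqPhi (squarefree_prime pr_q pr_q); rewrite ePhi' dvdn_addl // => ->.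
Qed.

Lemma exists_prime_dvd_sum_expn : (forall m, x <> 2 ^ m - 1) ->
  exists2 p, prime p & (p %| Phi) && ~~ (p %| x - 1).
Proof.
move=> not_mersenne; have Phi_gt1 := ltn_trans (prime_gt1 pr_q) prime_lt_sum_expn.
have [qnat|not_qnat] := boolP (q.-nat Phi).
  have dv_qPhi : q %| Phi.
    have [[|k] ePhi] := p_natP qnat; first by move: Phi_gt1; rewrite ePhi.
    by rewrite ePhi expnS dvdn_mulr.
  have [dv_qx|] := boolP (q %| x - 1); last by exists q; rewrite ?dv_qPhi.
  by have [_ [m /not_mersenne]] := pnat_sum_expn_mersenne qnat dv_qx.
have Phiq'_gt1 : 1 < Phi`_q^'.
  by rewrite ltn_neqAle part_gt0 andbT eq_sym partn_eq1 ?pnatNK // (ltnW Phi_gt1).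
have pr_p := pdiv_prime Phiq'_gt1.
have dv_pPhi : pdiv Phi`_q^' %| Phi := dvdn_trans (pdiv_dvd _) (dvdn_part _ _).
have p_ne_q : pdiv Phi`_q^' != q.
  have := pi_pdiv Phi`_q^'; rewrite Phiq'_gt1 pi_of_part ?inE; last exact: ltnW.
  by case/andP.
exists (pdiv Phi`_q^') => //; rewrite dv_pPhi; apply: contra p_ne_q => dv_px.
by apply/eqP; apply: prime_dvd_sum_expn_sub1.
Qed.

End CyclotomicSum.

Lemma exists_prime_dvd_expn_sub1 x n : 1 < x -> 1 < n -> (forall m, x <> 2 ^ m - 1) ->
  exists2 p, prime p & (p %| x ^ n - 1) && ~~ (p %| x - 1).
Proof.
move=> x_gt1 n_gt1 not_mersenne; have pr_q := pdiv_prime n_gt1; set q := pdiv n in pr_q.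
have [p pr_p /andP[dv_pPhi ndv_px]] := exists_prime_dvd_sum_expn x_gt1 pr_q not_mersenne.
exists p; rewrite // ndv_px andbT (dvdn_trans dv_pPhi) //.
have /dvdnP[k ->] : q %| n := pdiv_dvd n.
by rewrite mulnC expnM !subn1 !predn_exp dvdn_mulr ?dvdn_mull.
Qed.

Lemma arithP a b w : arith a b w <-> a <= w /\ b %| w - a.
Proof.
split=> [[n ->]|[le_aw /dvdnP[n ew]]]; first by rewrite leq_addr addKn dvdn_mulr.
by exists n; rewrite mulnC -ew subnKC.
Qed.

Lemma arith_meet a b z e : 0 < b -> 0 < e -> z = a %[mod gcdn b e] ->
  exists w, arith z e w /\ arith a b w.
Proof.
move=> b_gt0 e_gt0 eq_za; set g := gcdn b e.
have le_z_abz : z <= a + b * z := leq_trans (leq_pmull z b_gt0) (leq_addl _ _).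
have /dvdnP[t et] : g %| a + b * z - z.
  rewrite -eqn_mod_dvd // -modnDmr (eqP (dvdn_mulr z (dvdn_gcdl b e))) addn0.
  by rewrite eq_za.
have [s _ dv_b_gse] := Bezoutl e b_gt0.
set k := s * (b - 1) * t.
have ek : e * k = a + b * z - z %[mod b].
  (* b divides g + s e, so e k = - g (b - 1) t = g t (mod b). *)
  apply/eqP; rewrite -(eqn_modDl (g * (b - 1) * t)) et.
  have -> : g * (b - 1) * t + e * k = (g + s * e) * ((b - 1) * t) by rewrite /k; nia.
  have -> : g * (b - 1) * t + t * g = b * (g * t) by nia.
  by rewrite modnMr (eqP (dvdn_mulr _ dv_b_gse)).
exists (e * a * b + (z + e * k)); split; first by exists (k + a * b); rewrite mulnDr mulnA; lia.
have le_aw : a <= e * a * b + (z + e * k).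
  exact: leq_trans (leq_pmull a e_gt0) (leq_trans (leq_pmulr _ b_gt0) (leq_addr _ _)).
apply/arithP; split; rewrite // -eqn_mod_dvd // modnMDl -modnDmr ek modnDmr.
by rewrite subnKC // addnC mulnC modnMDl.
Qed.

Lemma kirch_param_prime a p : 0 < a -> prime p -> ~~ (p %| a) -> kirch_param a p.
Proof.
move=> a_gt0 pr_p ndv_pa; split=> //; split; first exact: prime_gt0.
by split; [rewrite coprime_sym prime_coprime | exact: squarefree_prime].
Qed.

Lemma arith_self a b : arith a b a.
Proof. by exists 0; rewrite muln0 addn0. Qed.

Lemma arith_dvd a b m : b %| m -> arith a m `<=` arith a b.
Proof. by move=> /dvdnP[c ->] w [n ->]; exists (c * n); rewrite mulnA [c * b]mulnC. Qed.

Lemma arith_open a b : kirch_param a b -> kirch_open (arith a b).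
Proof.
move=> par_ab; split=> [_ [n ->]|w aw]; first by case: par_ab => a_gt0 _; rewrite /Npos /= ltn_addr.
by exists a, b; split=> //; split.
Qed.

Lemma kirch_open_nbhd V z : kirch_open V -> V z ->
  exists2 e, kirch_param z e & arith z e `<=` V.
Proof.
move=> [_ openV] Vz; have [a [b [[a_gt0 [b_gt0 [co_ab sqf_b]]] [[k ez] sub]]]] := openV z Vz.
exists b; last by move=> _ [j ->]; apply: sub; exists (k + j); rewrite ez mulnDr addnA.
by rewrite /kirch_param ez addn_gt0 a_gt0 /coprime gcdnC addnC mulnC gcdnMDl gcdnC.
Qed.

Lemma kirch_closureS U V : U `<=` V -> kirch_closure U `<=` kirch_closure V.
Proof.
move=> sUV z [z_gt0 clU]; split=> // W openW Wz.
by have [w [Ww Uw]] := clU W openW Wz; exists w; split; last exact: sUV.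
Qed.

Lemma kirch_closure_arithP a b z : kirch_param a b ->
  kirch_closure (arith a b) z <->
  0 < z /\ forall p, prime p -> p %| b -> ~~ (p %| z) -> z = a %[mod p].
Proof.
move=> [_ [b_gt0 _]]; split=> [[z_gt0 clz]|[z_gt0 congr_z]].
  split=> // p pr_p dv_pb ndv_pz.
  have par_zp := kirch_param_prime z_gt0 pr_p ndv_pz.
  have [w [[k ->] [j ew]]] := clz _ (arith_open par_zp) (arith_self z p).
  have [c eb] := dvdnP dv_pb.
  by rewrite -(modnMDl k z p) [k * p]mulnC addnC ew eb mulnAC addnC modnMDl.
split=> // V openV Vz; have [e [_ [e_gt0 [co_ze sqf_e]]] sub] := kirch_open_nbhd openV Vz.
have eq_za : z = a %[mod gcdn b e].
  apply: eq_mod_squarefree; first by rewrite gcdn_gt0 b_gt0.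
    exact: squarefree_dvd (dvdn_gcdr b e) sqf_e.
  move=> p pr_p; rewrite dvdn_gcd => /andP[dv_pb dv_pe]; apply: congr_z => //.
  apply: contraL dv_pe => dv_pz; rewrite -prime_coprime //.
  exact: coprime_dvdl dv_pz co_ze.
by have [w [/sub Vw abw]] := arith_meet b_gt0 e_gt0 eq_za; exists w.
Qed.

Lemma filterF_pair1_basic y B : filterF (pair1 y) B ->
  exists b d, [/\ kirch_param 1 b, kirch_param y d &
    kirch_closure (arith 1 b) `&` kirch_closure (arith y d) `<=` B].
Proof.
move=> [_ [U [tauU sub]]].
have [open1 U1] := tauU 1 (or_introl erefl); have [openy Uy] := tauU y (or_intror erefl).
have [b par_b sub_b] := kirch_open_nbhd open1 U1.
have [d par_d sub_d] := kirch_open_nbhd openy Uy.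
exists b, d; split=> // z [cl1 cly]; apply: sub => _ [->|->].
  exact: (kirch_closureS sub_b) cl1.
exact: (kirch_closureS sub_d) cly.
Qed.

Lemma filterF_pair1_of_basic y b d B : y != 1 -> kirch_param 1 b -> kirch_param y d ->
  B `<=` Npos -> kirch_closure (arith 1 b) `&` kirch_closure (arith y d) `<=` B ->
  filterF (pair1 y) B.
Proof.
move=> y_ne1 par_b par_d BN sub; split=> //.
exists (fun t => if t == 1 then arith 1 b else arith y d); split.
  move=> _ [->|->]; rewrite ?eqxx ?(negPf y_ne1);
  by split; [exact: arith_open | exact: arith_self].
move=> z clz; apply: sub; split.
  by have := clz 1 (or_introl erefl); rewrite eqxx.
by have := clz y (or_intror erefl); rewrite (negPf y_ne1).
Qed.

Lemma filterF_pair1_expn x n : 0 < n -> filterF (pair1 (x ^ n)) `<=` filterF (pair1 x).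
Proof.
move=> n_gt0; have [->|x_ne1] := eqVneq x 1; first by rewrite exp1n.
move=> B FB; have [b [d [par_b par_d sub]]] := filterF_pair1_basic FB.
have [_ [b_gt0 [_ sqf_b]]] := par_b; have [xn_gt0 [d_gt0 [co_xnd sqf_d]]] := par_d.
have par_m : kirch_param 1 (lcmn b d).
  by split=> //; split; [rewrite lcmn_gt0 b_gt0 | split; [exact: coprime1n | exact: squarefree_lcm]].
have par_x : kirch_param x d.
  split; first by move: xn_gt0; rewrite expn_gt0 gtn_eqF // orbF.
  by split=> //; split=> //; rewrite -(coprime_pexpl _ _ n_gt0).
apply: (filterF_pair1_of_basic x_ne1 par_m par_x) => [|z [clm clx]]; first by case: FB.
apply: sub; split; first exact: (kirch_closureS (arith_dvd (dvdn_lcml b d))) clm.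
have [z_gt0 congr_m] := (kirch_closure_arithP _ par_m).1 clm.
have [_ congr_x] := (kirch_closure_arithP _ par_x).1 clx.
apply/(kirch_closure_arithP _ par_d); split=> // p pr_p dv_pd ndv_pz.
have ez1 := congr_m p pr_p (dvdn_trans dv_pd (dvdn_lcmr b d)) ndv_pz.
by rewrite -modnXm -(congr_x p pr_p dv_pd ndv_pz) ez1 modnXm exp1n.
Qed.

Lemma exists_eq1_mod_dvd_other_primes p m : prime p -> 0 < m ->
  exists z, z = 1 %[mod p] /\ forall q, prime q -> q %| m -> q != p -> q %| z.
Proof.
move=> pr_p m_gt0; have [r co_pr em] := pfactor_coprime pr_p m_gt0.
exists (chinese p r 1 0); split; first exact: chinese_modl.
move=> q pr_q dv_qm q_ne_p; apply: dvdn_trans (_ : r %| _).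
  move: dv_qm; rewrite em Euclid_dvdM // Euclid_dvdX //.
  by rewrite (dvdn_prime2 pr_q pr_p) (negPf q_ne_p) orbF.
by rewrite /dvdn (chinese_modr co_pr) mod0n.
Qed.

Lemma filterF_pair1_not_sub x y p : prime p -> ~~ (p %| x) ->
  x != 1 %[mod p] -> y = 1 %[mod p] -> ~ filterF (pair1 x) `<=` filterF (pair1 y).
Proof.
move=> pr_p ndv_px x_ne1_mod y_eq1 sub_xy.
have x_gt0 : 0 < x by case: x ndv_px {x_ne1_mod sub_xy} => //; rewrite dvdn0.
have par_1 : kirch_param 1 p by apply: kirch_param_prime; rewrite // dvdn1 gtn_eqF ?prime_gt1.
have par_x := kirch_param_prime x_gt0 pr_p ndv_px.
have x_ne1 : x != 1 by apply: contraNneq x_ne1_mod => ->.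
set B0 := kirch_closure (arith 1 p) `&` kirch_closure (arith x p).
have /sub_xy FB0 : filterF (pair1 x) B0.
  by apply: (filterF_pair1_of_basic x_ne1 par_1 par_x) => // z [[]].
have [b [d [par_b par_d sub]]] := filterF_pair1_basic FB0.
have [_ [b_gt0 _]] := par_b; have [_ [d_gt0 _]] := par_d.
have bd_gt0 : 0 < b * d by rewrite muln_gt0 b_gt0.
have [z [z_eq1 dv_qz]] := exists_eq1_mod_dvd_other_primes pr_p bd_gt0.
have ndv_pz : ~~ (p %| z) by rewrite /dvdn z_eq1 modn_small ?prime_gt1.
have z_gt0 : 0 < z by case: z ndv_pz {z_eq1 dv_qz} => //; rewrite dvdn0.
have congr_at_p a q : a = 1 %[mod p] -> prime q -> q %| b * d -> ~~ (q %| z) -> z = a %[mod q].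
  move=> a_eq1 pr_q dv_qbd; have [->|q_ne_p] := eqVneq q p; first by rewrite z_eq1 a_eq1.
  by rewrite dv_qz.
have [cl_1 cl_x] : B0 z.
  apply: sub; split; [apply/(kirch_closure_arithP _ par_b) | apply/(kirch_closure_arithP _ par_d)].
    by split=> // q pr_q dv_qb; apply: congr_at_p => //; rewrite dvdn_mulr.
  by split=> // q pr_q dv_qd; apply: congr_at_p => //; rewrite dvdn_mull.
have [_ congr_1] := (kirch_closure_arithP _ par_1).1 cl_1.
have [_ congr_x] := (kirch_closure_arithP _ par_x).1 cl_x.
move: x_ne1_mod; rewrite -(congr_x p pr_p (dvdnn p) ndv_pz).
by rewrite (congr_1 p pr_p (dvdnn p) ndv_pz) eqxx.
Qed.

Theorem lemma3p20 (x : nat) (hx : (0 < x)%N) (hx1 : x <> 1%N) :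
  (* F_{1,x} is the greatest element of {F_{1,x^n} : n in N} *)
  ((exists n : nat, (0 < n)%N /\ filterF (pair1 (x ^ n)) = filterF (pair1 x)) /\
   (forall n : nat, (0 < n)%N -> filterF (pair1 (x ^ n)) `<=` filterF (pair1 x))) /\
  ((~ (exists m : nat, (0 < m)%N /\ x = (2 * m)%N) /\
    ~ (exists m : nat, (0 < m)%N /\ x = (2 ^ m - 1)%N)) ->
   [set n : nat | (0 < n)%N /\ filterF (pair1 (x ^ n)) = filterF (pair1 x)] = [set 1%N]).
Proof.
split; first by split=> [|n]; [exists 1; rewrite expn1 | exact: filterF_pair1_expn].
move=> [_ no_mersenne]; apply/seteqP.
split=> [n [n_gt0 eqF]|_ ->]; last by split=> //; rewrite expn1.
apply/eqP; rewrite eqn_leq n_gt0 andbT leqNgt; apply/negP => n_gt1.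
have x_gt1 : 1 < x by lia.
have not_mersenne m : x <> 2 ^ m - 1.
  by case: m => [|m] ex; [rewrite ex in hx | apply: no_mersenne; exists m.+1].
have [p pr_p /andP[dv_pxn ndv_px1]] := exists_prime_dvd_expn_sub1 x_gt1 n_gt1 not_mersenne.
have xn_eq1 : x ^ n = 1 %[mod p] by apply/eqP; rewrite eqn_mod_dvd // expn_gt0 hx.
have x_ne1 : x != 1 %[mod p] by rewrite eqn_mod_dvd // ltnW.
have ndv_px : ~~ (p %| x).
  apply/negP => /(dvdn_exp (ltnW n_gt1)).
  by rewrite /dvdn xn_eq1 modn_small ?prime_gt1.
by apply: (filterF_pair1_not_sub pr_p ndv_px x_ne1 xn_eq1); rewrite eqF.
Qed.
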